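(* Let $R$ be a commutative Artinian ring and $M$ a non-zero $R$-module with two minimal PS-hollow representations $\sum_{i=1}^n N_i=M=\sum_{i=1}^n K_i$, where both $N_i$ and $K_i$ are $H_i$-PS-hollow for each $i\in\{1,\dots,n\}$. If $In(N)$ is PS-hollow whenever $N$ is a main PS-hollow submodule of $M$, then $N_i=K_i$ for all $i\in\{1,\dots,n\}$.
   Context: All rings are commutative with unity. An $R$-submodule $N\leq M$ is PS-hollow iff for every ideal $I\leq R$ and every submodule $L\leq M$: $N\subseteq IM+L$ implies $N\subseteq IM$ or $N\subseteq L$. For a PS-hollow $N\leq M$ put $A_N=\{I\leq R: N\subseteq IM\}$, $H_N$ the set of minimal elements of $A_N$, and $In(N)=\bigcap_{I\in H_N} IM$ ($=M$ if $H_N=\emptyset$). For a set $H$ of ideals, $N$ is $H$-PS-hollow iff $N$ is PS-hollow and $H_N=H$. A minimal PS-hollow representation of $M$ is an expression $M=\sum_{i=1}^n N_i$ with each $N_i$ $H_i$-PS-hollow, such that $In(N_1),\dots,In(N_n)$ are pairwise incomparable and $N_j\not\subseteq\sum_{i\neq j}N_i$ for every $j$. A main PS-hollow submodule of $M$ is a submodule occurring as a summand $N_i$ in some minimal PS-hollow representation of $M$. *)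

From HB Require Import structures.
From mathcomp Require Import all_boot all_order all_algebra.
From mathcomp Require Import boolp classical_sets.
Set Implicit Arguments. Unset Strict Implicit. Unset Printing Implicit Defensive.
Import GRing.Theory.
Local Open Scope ring_scope.
Local Open Scope classical_set_scope.

Section PSHollow.
Variables (R : comNzRingType) (M : lmodType R).

Definition is_ideal (I : set R) : Prop :=
  I 0 /\ (forall x y, I x -> I y -> I (x + y)) /\ (forall r x, I x -> I (r * x)).

Definition is_submod (N : set M) : Prop :=
  N 0 /\ (forall x y, N x -> N y -> N (x + y)) /\ (forall r x, N x -> N (r *: x)).

Definition artinian_ring : Prop :=
  forall I : nat -> set R, (forall k, is_ideal (I k)) ->
    (forall k, I k.+1 `<=` I k) -> exists k0, forall k, (k0 <= k)%N -> I k = I k0.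

(* IM = submodule generated by { a *: m | a in I, m in M } (finite sums) *)
Definition idmod (I : set R) : set M :=
  [set x | exists (k : nat) (a : 'I_k -> R) (m : 'I_k -> M),
             (forall i, I (a i)) /\ x = \sum_(i < k) a i *: m i].

Definition addsub (A B : set M) : set M := [set x | exists a b, A a /\ B b /\ x = a + b].

Definition sumsub (n : nat) (N : 'I_n -> set M) (P : pred 'I_n) : set M :=
  [set x | exists f : 'I_n -> M, (forall i, P i -> N i (f i)) /\ x = \sum_(i | P i) f i].

Definition PS_hollow (N : set M) : Prop :=
  is_submod N /\
  forall (I : set R) (L : set M), is_ideal I -> is_submod L ->
    N `<=` addsub (idmod I) L -> N `<=` idmod I \/ N `<=` L.

Definition A_of (N : set M) : set (set R) := [set I | is_ideal I /\ N `<=` idmod I].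

Definition H_of (N : set M) : set (set R) :=
  [set I | A_of N I /\ forall J, A_of N J -> J `<=` I -> J = I].

(* In(N) = intersection of IM over I in H_N (= M when H_N is empty) *)
Definition In_of (N : set M) : set M := \bigcap_(I in H_of N) idmod I.

Definition H_PS_hollow (H : set (set R)) (N : set M) : Prop :=
  PS_hollow N /\ H_of N = H.

Definition min_PS_rep (n : nat) (N : 'I_n -> set M) : Prop :=
  (forall i, exists H, H_PS_hollow H (N i)) /\
  sumsub N predT = setT /\
  (forall i j, i != j -> ~ (In_of (N i) `<=` In_of (N j))) /\
  (forall j, ~ (N j `<=` sumsub N (fun i => i != j))).

Definition main_PS_hollow (N : set M) : Prop :=
  exists (n : nat) (Ns : 'I_n -> set M) (i : 'I_n), min_PS_rep Ns /\ Ns i = N.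

End PSHollow.

(* By symmetry it suffices to show
   K_j ⊆ N_j.  For i ≠ j some I_i ∈ H_i satisfies K_j ⊄ I_i M: otherwise every
   I_i M contains K_j, hence (by DCC) a minimal JM with J ∈ H_{K_j}, hence
   In(K_j), giving In(K_j) ⊆ In(K_i).  Since N_i ⊆ I_i M,
   K_j ⊆ M = N_j + Σ_{i≠j} N_i ⊆ N_j + Σ_{i≠j} I_i M, and PS-hollowness of K_j
   strips the summands I_i M off one at a time. *)
From HB Require Import structures.
From mathcomp Require Import all_boot all_order all_algebra.
From mathcomp Require Import boolp classical_sets.
Set Implicit Arguments. Unset Strict Implicit. Unset Printing Implicit Defensive.
Import GRing.Theory.
Local Open Scope ring_scope.
Local Open Scope classical_set_scope.

Section PSHollowUniqueness.
Variables (R : comNzRingType) (M : lmodType R).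

Lemma idmod_submod (I : set R) : is_ideal I -> is_submod (@idmod R M I).
Proof.
move=> [_ [_ IZ]]; split; [|split].
- exists 0%N, (fun _ => 0), (fun _ => 0); split; first by case.
  by rewrite big_ord0.
- move=> _ _ [k1 [a1 [m1 [Ia1 ->]]]] [k2 [a2 [m2 [Ia2 ->]]]].
  pose am (i : 'I_(k1 + k2)) : R * M :=
    match split i with inl i1 => (a1 i1, m1 i1) | inr i2 => (a2 i2, m2 i2) end.
  exists (k1 + k2)%N, (fun i => (am i).1), (fun i => (am i).2); split.
    by move=> i; rewrite /am; case: (split i).
  rewrite big_split_ord /=; congr (_ + _); apply: eq_bigr => i _.
    by rewrite /am (unsplitK (inl i)).
  by rewrite /am (unsplitK (inr i)).
- move=> r _ [k [a [m [Ia ->]]]].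
  exists k, (fun i => r * a i), m; split; first by move=> i; apply: IZ.
  by rewrite scaler_sumr; apply: eq_bigr => i _; rewrite scalerA.
Qed.

Lemma addsub_submod (A B : set M) :
  is_submod A -> is_submod B -> is_submod (addsub A B).
Proof.
move=> [A0 [AD AZ]] [B0 [BD BZ]]; split; [|split].
- by exists 0, 0; rewrite addr0.
- move=> _ _ [a1 [b1 [Aa1 [Bb1 ->]]]] [a2 [b2 [Aa2 [Bb2 ->]]]].
  exists (a1 + a2), (b1 + b2); split; first exact: AD.
  by split; [exact: BD|rewrite addrACA].
- move=> r _ [a [b [Aa [Bb ->]]]].
  exists (r *: a), (r *: b); split; first exact: AZ.
  by split; [exact: BZ|rewrite scalerDr].
Qed.

Definition addsub_seq (T : Type) (A : T -> set M) (L : set M) (s : seq T) :=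
  foldr (fun i S => addsub (A i) S) L s.

Lemma addsub_seq_sum (T : eqType) (A : T -> set M) L (s : seq T) y g :
  L y -> (forall i, i \in s -> A i (g i)) ->
  addsub_seq A L s (y + \sum_(i <- s) g i).
Proof.
move=> Ly; elim: s => [|i s IH] Ag /=; first by rewrite big_nil addr0.
exists (g i), (y + \sum_(k <- s) g k); split; first by apply: Ag; rewrite inE eqxx.
split; last by rewrite big_cons addrCA.
by apply: IH => k ks; apply: Ag; rewrite inE ks orbT.
Qed.

Lemma addsub_seq_submod (T : eqType) (A : T -> set M) L (s : seq T) :
  is_submod L -> (forall i, i \in s -> is_submod (A i)) ->
  is_submod (addsub_seq A L s).
Proof.
move=> subL; elim: s => [|i s IH] subA //=.
apply: addsub_submod; first by apply: subA; rewrite inE eqxx.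
by apply: IH => k ks; apply: subA; rewrite inE ks orbT.
Qed.

Lemma PS_hollow_addsub_seq (T : eqType) (I : T -> set R) (N L : set M) (s : seq T) :
  PS_hollow N -> is_submod L ->
  (forall i, i \in s -> is_ideal (I i) /\ ~ N `<=` idmod (I i)) ->
  N `<=` addsub_seq (fun i => idmod (I i)) L s -> N `<=` L.
Proof.
move=> [_ hollowN] subL; elim: s => [|i s IH] hI //= NIL.
have hIs k : k \in s -> is_ideal (I k) /\ ~ N `<=` idmod (I k).
  by move=> ks; apply: hI; rewrite inE ks orbT.
have [Ii NIi] := hI i (mem_head i s).
have subS : is_submod (addsub_seq (fun k => idmod (I k)) L s).
  by apply: addsub_seq_submod => // k /hIs[Ik _]; apply: idmod_submod.
by case: (hollowN _ _ Ii subS NIL) => // NS; apply: IH.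
Qed.

Hypothesis hart : artinian_ring R.

Lemma artinian_ex_minimal (S : set (set R)) (I : set R) :
  (forall J, S J -> is_ideal J) -> S I ->
  exists J, S J /\ forall J', S J' -> J' `<=` J -> J' = J.
Proof.
move=> Sid SI; apply: contrapT => nomin.
have smaller J : exists J', S J -> S J' /\ J' `<=` J /\ J' <> J.
  case: (pselect (S J)) => [SJ|nSJ]; last by exists J => /nSJ.
  apply: contrapT => nosmaller; apply: nomin; exists J; split=> // J' SJ' J'J.
  by apply: contrapT => neJ'; apply: nosmaller; exists J' => _.
have [next hnext] := choice smaller.
pose chain k := iter k next I.
have Schain k : S (chain k) by elim: k => [|k IH] //=; have [] := hnext _ IH.
have [k0 stable] := @hart chain (fun k => Sid _ (Schain k))
  (fun k => (hnext _ (Schain k)).2.1).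
by have [_ [_]] := hnext _ (Schain k0); apply; apply: stable k0.+1 (leqnSn k0).
Qed.

Lemma A_of_ex_H_of (N : set M) (I : set R) :
  A_of N I -> exists J, H_of N J /\ J `<=` I.
Proof.
move=> AI.
have [J [[AJ JI] minJ]] := @artinian_ex_minimal
  [set J | A_of N J /\ J `<=` I] I (fun J h => h.1.1) (conj AI (@subset_refl _ I)).
exists J; split=> //; split=> // J' AJ' J'J.
by apply: minJ => //; split=> // x /J'J /JI.
Qed.

Lemma In_of_sub_idmod (N : set M) (I : set R) :
  A_of N I -> In_of N `<=` idmod I.
Proof.
move=> AI x Inx; have [J [HJ JI]] := A_of_ex_H_of AI.
have [k [a [m [Ja ->]]]] := Inx J HJ.
by exists k, a, m; split=> // i; apply/JI/Ja.
Qed.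

Lemma In_of_sub (N N' : set M) :
  (forall I, H_of N' I -> N `<=` idmod I) ->
  In_of N `<=` In_of N'.
Proof.
move=> NI x Inx I HI.
by apply: In_of_sub_idmod Inx; split; [exact: HI.1.1|exact: NI].
Qed.

Lemma min_PS_rep_ex_avoiding_ideal n (K : 'I_n -> set M) i j :
  min_PS_rep K -> i != j ->
  exists I, H_of (K i) I /\ ~ K j `<=` idmod I.
Proof.
move=> [_ [_ [incomp _]]] ij; apply: contrapT => noI.
apply: (incomp j i); first by rewrite eq_sym.
apply: In_of_sub => I HI; apply: contrapT => KjI.
by apply: noI; exists I.
Qed.

Lemma min_PS_rep_sub n (N K : 'I_n -> set M) j :
  min_PS_rep N -> min_PS_rep K -> (forall i, H_of (N i) = H_of (K i)) -> K j `<=` N j.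
Proof.
move=> hN hK HNK.
have avoiding i : exists I, i != j -> H_of (K i) I /\ ~ K j `<=` idmod I.
  have [->|ij] := eqVneq i j; first by exists setT => /negP.
  by have [I hI] := min_PS_rep_ex_avoiding_ideal hK ij; exists I.
have [avoid havoid] := choice avoiding.
pose others := [seq i <- index_enum 'I_n | i != j].
have hothers i : i \in others -> i != j by rewrite mem_filter => /andP[].
have [_ [hollowKj _]] := hK.1 j.
have [_ [[submodNj _] _]] := hN.1 j.
apply: (@PS_hollow_addsub_seq _ avoid _ _ others) => //.
  by move=> i /hothers/havoid[[[Ii _] _] nKj].
move=> x _; have : sumsub N predT x by rewrite hN.2.1.
case=> f [Nf ->]; rewrite (bigD1 j) //= -big_filter.
apply: addsub_seq_sum; first exact: Nf.
move=> i /hothers/havoid[]; rewrite -HNK => -[[_ NiI] _] _.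
exact/NiI/Nf.
Qed.

End PSHollowUniqueness.

Unset Implicit Arguments.
Theorem corollary5p11 (R : comNzRingType) (M : lmodType R)
  (hart : artinian_ring R) (hM : exists x : M, x != 0)
  (n : nat) (N K : 'I_n -> set M) (H : 'I_n -> set (set R))
  (hN : min_PS_rep N) (hK : min_PS_rep K)
  (hNH : forall i, H_PS_hollow (H i) (N i))
  (hKH : forall i, H_PS_hollow (H i) (K i))
  (hIn : forall L : set M, main_PS_hollow L -> PS_hollow (In_of L)) :
  forall i, N i = K i.
Proof.
have HNK i : H_of (N i) = H_of (K i) by rewrite (hNH i).2 (hKH i).2.
move=> i; apply/seteqP; split; last exact: (min_PS_rep_sub hart hN hK HNK).
by apply: (min_PS_rep_sub hart hK hN) => k; rewrite HNK.
Qed.
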